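(* Let $S$ be a standard quantum entity on a finite-dimensional complex Hilbert space $\mathcal{H}$ with set of states $\Sigma$. For $K\subseteq\Sigma$ let $L=\{c: p_{\bar c}\in K\}$. Then $K^\perp=\{p_{\bar c}: c\in L^\perp\}$ and $cl_{orth}(K)=\{p_{\bar c}: c\in cl(L)\}$, where $L^\perp$ is the orthogonal complement and $cl(L)=(L^\perp)^\perp$ the closed linear span of $L$ in $\mathcal{H}$. If $L$ is a closed subspace of $\mathcal{H}$ and $F=\{p_{\bar c}:c\in L\}$, then $F\in\mathcal{F}_{orth}$. Moreover $\mathcal{F}_{eig}=\mathcal{F}_{orth}$.
   Context: A spectral family of $\mathcal{H}$ is a set $E=\{E_1,\dots,E_r\}$ of pairwise orthogonal nonzero orthogonal projections with $\sum_kE_k=I$. The standard quantum entity has states $p_{\bar c}$ (one per ray $\bar c$, generated by a unit vector $c$), experiments $e_E$ (one per spectral family $E$), outcomes $x_{E_k}$ (one per orthogonal projection), and $O(e_E,p_{\bar c})=\{x_{E_k}:E_k\in E,E_kc\neq0\}$. State orthogonality: $p\perp q$ iff some experiment $e$ has $O(e,p)\cap O(e,q)=\emptyset$. For $K\subseteq\Sigma$, $K^\perp=\{p\in\Sigma:p\perp q\text{ for all }q\in K\}$, $cl_{orth}(K)=(K^\perp)^\perp$, and $\mathcal{F}_{orth}$ is the set of $K$ with $cl_{orth}(K)=K$. State eigen closure system: for an experiment $e$ with outcome set $O(e)=\bigcup_pO(e,p)$ and $A\subseteq O(e)$, $eig_e(A)=\{p: O(e,p)\subseteq A\}$; $\mathcal{F}_{eig}$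 is the set of all intersections of families of sets $eig_e(A)$ ($e$ ranging over experiments). *)

From Stdlib Require Import Reals.
From mathcomp Require Import all_boot all_order all_algebra.
From mathcomp Require Import complex Rstruct.
Set Implicit Arguments. Unset Strict Implicit. Unset Printing Implicit Defensive.
Import GRing.Theory Num.Theory.
Local Open Scope ring_scope.

Definition CC : numClosedFieldType := (Rdefinitions.R)[i]%type.

(* ---------- Generic entity: states St, experiments Ex, outcomes Out,
   O e p = set of possible outcomes of e in state p. ---------- *)
Section Entity.
Variables (St Ex Out : Type) (O : Ex -> St -> Out -> Prop).

Definition orth (p q : St) : Prop :=
  exists e : Ex, forall x : Out, ~ (O e p x /\ O e q x).

Definition sperp (K : St -> Prop) : St -> Prop :=
  fun p => forall q, K q -> orth p q.

Definition cl_orth (K : St -> Prop) : St -> Prop := sperp (sperp K).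

Definition F_orth (K : St -> Prop) : Prop := cl_orth K = K.

Definition outcomes (e : Ex) : Out -> Prop := fun x => exists p, O e p x.

Definition eig (e : Ex) (A : Out -> Prop) : St -> Prop :=
  fun p => forall x, O e p x -> A x.

(* K in F_eig: K is the intersection of a family of sets eig_e(A), A subset O(e)
   (the empty family has intersection the whole state space). *)
Definition F_eig (K : St -> Prop) : Prop :=
  exists FF : (St -> Prop) -> Prop,
    (forall X, FF X -> exists (e : Ex) (A : Out -> Prop),
        (forall x, A x -> outcomes e x) /\ X = eig e A) /\
    K = (fun p => forall X, FF X -> X p).

End Entity.

Section Quantum.
Variable n : nat.

Definition dotp (u v : 'cV[CC]_n) : CC := \sum_(i < n) (u i 0)^* * v i 0.

Definition unitv (c : 'cV[CC]_n) : Prop := dotp c c = 1.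

Definition vperp (L : 'cV[CC]_n -> Prop) : 'cV[CC]_n -> Prop :=
  fun v => forall u, L u -> dotp u v = 0.

Definition vcl (L : 'cV[CC]_n -> Prop) : 'cV[CC]_n -> Prop := vperp (vperp L).

Definition subspace (L : 'cV[CC]_n -> Prop) : Prop :=
  L 0 /\ (forall (a : CC) u v, L u -> L v -> L (a *: u + v)).

Definition closed_set (L : 'cV[CC]_n -> Prop) : Prop :=
  forall c, (forall eps : CC, 0 < eps -> exists d, L d /\ dotp (c - d) (c - d) < eps) -> L c.

Definition closed_subspace (L : 'cV[CC]_n -> Prop) : Prop :=
  subspace L /\ closed_set L.

Definition ray (c : 'cV[CC]_n) : 'cV[CC]_n -> Prop := fun v => exists a : CC, v = a *: c.

Record state := State {
  st_ray : 'cV[CC]_n -> Prop ;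
  st_ok : exists c, unitv c /\ st_ray = ray c }.

Definition is_pbar (c : 'cV[CC]_n) (s : state) : Prop := unitv c /\ st_ray s = ray c.

Definition adjmx (A : 'M[CC]_n) : 'M[CC]_n := (map_mx Num.conj A)^T.

Definition orth_proj (P : 'M[CC]_n) : Prop := P *m P = P /\ adjmx P = P.

Definition spectral_family (E : seq 'M[CC]_n) : Prop :=
  [/\ uniq E,
      forall P, P \in E -> orth_proj P /\ P <> 0,
      forall P Q, P \in E -> Q \in E -> P <> Q -> P *m Q = 0
    & \sum_(P <- E) P = 1%:M].

(* experiments: one per spectral family; outcomes: the orthogonal projections *)
Definition experiment := {E : seq 'M[CC]_n | spectral_family E}.

Definition stdO (e : experiment) (s : state) (x : 'M[CC]_n) : Prop :=
  x \in proj1_sig e /\ exists c, is_pbar c s /\ x *m c <> 0.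

Definition pbar_set (M : 'cV[CC]_n -> Prop) : state -> Prop :=
  fun s => exists c, M c /\ is_pbar c s.

Definition vecs_of (K : state -> Prop) : 'cV[CC]_n -> Prop :=
  fun c => exists s, K s /\ is_pbar c s.

End Quantum.

(* States p_c and p_d are orthogonal exactly when <c, d> = 0: an experiment
   separating them splits the identity into self-adjoint projections each of
   which kills c or d, and conversely the experiment {|c><c|, 1 - |c><c|}
   separates them.  Hence state orthogonal complements are images of vector
   orthogonal complements, and cl_orth corresponds to the double orthogonal
   complement, which fixes every subspace in finite dimension.  A set eig_e(A)
   consists of the states supported in the subspace of vectors killed by the
   outcomes outside A, so it is orth-closed, and orth-closed sets are stable
   under intersections.  Conversely an orth-closed K is the intersection, over
   t = p_w in K^perp, of the sets {s | s _|_ t} = eig_e(O(e) \ {|w><w|}). *)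

From Stdlib Require Import Reals.
From mathcomp Require Import all_boot all_order all_algebra.
From mathcomp Require Import complex Rstruct.
From Stdlib Require Import Classical FunctionalExtensionality PropExtensionality.
Set Implicit Arguments. Unset Strict Implicit. Unset Printing Implicit Defensive.
Import GRing.Theory Num.Theory.
Local Open Scope ring_scope.

Lemma pred_ext (T : Type) (P Q : T -> Prop) : (forall x, P x <-> Q x) -> P = Q.
Proof.
by move=> PQ; apply: functional_extensionality => x; apply: propositional_extensionality.
Qed.

Section Entity.
Variables (St Ex Out : Type) (O : Ex -> St -> Out -> Prop).
Implicit Types (K X : St -> Prop) (p q : St).

Lemma orth_sym p q : orth O p q -> orth O q p.
Proof. by move=> [e He]; exists e => x [Hq Hp]; apply: (He x). Qed.

Lemma sperpS K K' : (forall p, K p -> K' p) -> forall p, sperp O K' p -> sperp O K p.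
Proof. by move=> KK' p Hp q Kq; apply/Hp/KK'. Qed.

Lemma sub_cl_orth K p : K p -> cl_orth O K p.
Proof. by move=> Kp q Hq; apply/orth_sym/Hq. Qed.

Lemma F_orth_bigcap (FF : (St -> Prop) -> Prop) :
  (forall X, FF X -> F_orth O X) -> F_orth O (fun p => forall X, FF X -> X p).
Proof.
move=> closedFF; apply: pred_ext => p; split; last exact: sub_cl_orth.
move=> Hp X FX; rewrite -(closedFF X FX).
by apply: sperpS Hp; apply: sperpS => q; apply.
Qed.

Lemma F_orth_of_eig K :
  (forall e A, F_orth O (eig O e A)) -> F_eig O K -> F_orth O K.
Proof.
move=> eig_closed [FF [eigFF ->]]; apply: F_orth_bigcap => X /eigFF [e [A [_ ->]]].
exact: eig_closed.
Qed.

Lemma F_eig_of_orth K :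
  (forall q, exists e A, (forall x, A x -> outcomes O e x) /\ eig O e A = orth O ^~ q) ->
  F_orth O K -> F_eig O K.
Proof.
move=> orth_eig closedK.
exists (fun X => exists2 q, sperp O K q & X = orth O ^~ q); split.
  by move=> X [q _ ->]; have [e [A [AO <-]]] := orth_eig q; exists e, A.
rewrite -{1}closedK; apply: pred_ext => p; split.
  by move=> Hp X [q Kq ->]; apply: Hp.
by move=> Hp q Kq; apply: (Hp (orth O ^~ q)); exists q.
Qed.

End Entity.

Section InnerProduct.
Variable n : nat.
Implicit Types (u v w : 'cV[CC]_n) (A : 'M[CC]_n).

Lemma dotpC u v : dotp v u = (dotp u v)^*.
Proof.
rewrite /dotp rmorph_sum; apply: eq_bigr => i _.
by rewrite rmorphM /= conjCK mulrC.
Qed.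

Lemma dotp_eq0C u v : (dotp v u = 0) = (dotp u v = 0).
Proof. by apply: propositional_extensionality; split=> H; rewrite dotpC H rmorph0. Qed.

Lemma dotpDr u v w : dotp u (v + w) = dotp u v + dotp u w.
Proof. by rewrite /dotp -big_split; apply: eq_bigr => i _; rewrite mxE mulrDr. Qed.

Lemma dotpZr a u v : dotp u (a *: v) = a * dotp u v.
Proof. by rewrite /dotp mulr_sumr; apply: eq_bigr => i _; rewrite mxE mulrCA. Qed.

Lemma dotpZl a u v : dotp (a *: u) v = a^* * dotp u v.
Proof. by rewrite /dotp mulr_sumr; apply: eq_bigr => i _; rewrite mxE rmorphM mulrA. Qed.

Lemma dotp0r u : dotp u 0 = 0.
Proof. by rewrite -(scale0r 0) dotpZr mul0r. Qed.

Lemma dotp0l u : dotp 0 u = 0.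
Proof. by rewrite -(scale0r 0) dotpZl rmorph0 mul0r. Qed.

Lemma dotp_sumr (I : Type) (r : seq I) (F : I -> 'cV[CC]_n) u :
  dotp u (\sum_(i <- r) F i) = \sum_(i <- r) dotp u (F i).
Proof.
elim: r => [|i r IH]; first by rewrite !big_nil dotp0r.
by rewrite !big_cons dotpDr IH.
Qed.

Lemma dotp_eq0 u : dotp u u = 0 -> u = 0.
Proof.
move=> uu0; apply/matrixP => i j; rewrite (ord1 j) mxE.
have u_ge0 k : 0 <= (u k 0)^* * u k 0 by rewrite mulrC mul_conjC_ge0.
have /eqP := @psumr_eq0P _ _ predT _ (fun k _ => u_ge0 k) uu0 i isT.
by rewrite mulrC mul_conjC_eq0 => /eqP.
Qed.

Lemma dotp_adjmx A u v : dotp u (A *m v) = dotp (adjmx A *m u) v.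
Proof.
rewrite /dotp.
under eq_bigr do rewrite mxE mulr_sumr.
under [RHS]eq_bigr do rewrite mxE rmorph_sum mulr_suml.
rewrite exchange_big /=; apply: eq_bigr => i _; apply: eq_bigr => j _.
by rewrite !mxE rmorphM /= conjCK mulrA [_^* * _]mulrC.
Qed.

Lemma unitv_neq0 u : unitv u -> u != 0.
Proof. by apply: contraPneq => ->; rewrite /unitv dotp0l => /esym/eqP; rewrite oner_eq0. Qed.

Lemma unitv_normalize v : v != 0 -> exists2 a : CC, a != 0 & unitv (a *: v).
Proof.
move=> v0; set r := dotp v v.
have r_ge0 : 0 <= r by apply: sumr_ge0 => i _; rewrite mulrC mul_conjC_ge0.
have s0 : sqrtC r != 0.
  by rewrite sqrtC_eq0; apply: contra v0 => /eqP/dotp_eq0 ->.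
exists (sqrtC r)^-1; first by rewrite invr_eq0.
rewrite /unitv dotpZl dotpZr -/r geC0_conj ?invr_ge0 ?sqrtC_ge0 //.
by rewrite mulrA -expr2 exprVn sqrtCK mulVf // -sqrtC_eq0.
Qed.

End InnerProduct.

Section Subspaces.
Variable n : nat.
Implicit Types (u v : 'cV[CC]_n) (B : 'M[CC]_n) (L M : 'cV[CC]_n -> Prop).

Definition scale_closed M := forall a v, M v -> M (a *: v).

Lemma vperp_scale_closed L : scale_closed (vperp L).
Proof. by move=> a v Lv u Lu; rewrite dotpZr Lv ?mulr0. Qed.

Lemma vperp_unitv M : scale_closed M -> vperp (fun u => unitv u /\ M u) = vperp M.
Proof.
move=> Msc; apply: pred_ext => v; split; last by move=> Mv u [_ Mu]; apply: Mv.
move=> Mv u Mu; have [->|u0] := eqVneq u 0; first exact: dotp0l.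
have [a a0 ua] := unitv_normalize u0.
have -> : u = a^-1 *: (a *: u) by rewrite scalerA mulVf // scale1r.
by rewrite dotpZl Mv ?mulr0 //; split=> //; apply: Msc.
Qed.

Lemma subspace_scale_closed L : subspace L -> scale_closed L.
Proof. by move=> [L0 LD] a v Lv; rewrite -[_ *: _]addr0; apply: LD. Qed.

Lemma sub_vcl L v : L v -> vcl L v.
Proof. by move=> Lv u Lu; rewrite dotp_eq0C; apply: Lu. Qed.

(* The orthogonal complement of a row space, as in spectral.v where this
   notation is local. *)
Local Notation "B ^!" :=
  (orthomx Num.conj (mx_of_hermitian (hermitian1mx _)) B) : matrix_set_scope.

Lemma dotp_ortho u v : (v^T <= (u^T)^!)%MS = (dotp u v == 0).
Proof.
rewrite orthomx1E [_ *m _]mx11_scalar fmorph_eq0 !mxE.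
by rewrite /dotp; congr (_ == 0); apply: eq_bigr => i _; rewrite !mxE mulrC.
Qed.

Definition row_span_in L B := forall u : 'rV_n, (u <= B)%MS -> L u^T.

Lemma row_span_in_adds L B v : subspace L -> row_span_in L B -> L v ->
  row_span_in L <<(B + v^T)%MS>>%MS.
Proof.
move=> [_ LD] LB Lv u; rewrite genmxE => /sub_addsmxP [[x y] /= ->].
rewrite [y]mx11_scalar mul_scalar_mx linearD linearZ /= trmxK addrC.
by apply: LD => //; apply/LB/submxMl.
Qed.

Lemma mxrank_adds_gt B (v : 'rV[CC]_n) :
  ~~ (v <= B)%MS -> (\rank B < \rank (B + v))%N.
Proof.
by move=> vB; apply: rank_ltmx; rewrite ltmxE addsmxSl addsmx_sub submx_refl (negPf vB).
Qed.

Lemma exists_spanning_mx L : subspace L ->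
  exists B : 'M[CC]_n, row_span_in L B /\ forall v, L v -> (v^T <= B)%MS.
Proof.
(* Otherwise vectors of L could be adjoined forever, raising the rank past n. *)
move=> Ls; apply: NNPP => noB.
have grow B : row_span_in L B -> exists v, L v /\ ~~ (v^T <= B)%MS.
  move=> LB; apply: NNPP => Bv; apply: noB; exists B; split=> // v Lv.
  by apply: NNPP => vB; apply: Bv; exists v; split=> //; apply/negP.
suff /(_ n.+1) [B [_]] : forall k, exists B, row_span_in L B /\ (k <= \rank B)%N.
  by rewrite ltnNge rank_leq_col.
elim=> [|k [B [LB kB]]].
  exists 0; split=> // u; rewrite submx0 => /eqP ->; rewrite trmx0; exact: (proj1 Ls).
have [v [Lv vB]] := grow B LB.
exists <<(B + v^T)%MS>>%MS; split; first exact: row_span_in_adds.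
by rewrite genmxE (leq_ltn_trans kB) // mxrank_adds_gt.
Qed.

Lemma vcl_subspace L : subspace L -> vcl L = L.
Proof.
move=> Ls; apply: pred_ext => v; split; last exact: sub_vcl.
have [B [LB BL]] := exists_spanning_mx Ls.
move=> Lv; rewrite -[v]trmxK; apply: LB.
(* [B^!^! = B], and the rows of [B^!] lie in [vperp L]. *)
rewrite -(ortho_id B) orthomx_sym; apply/row_subP => i.
rewrite -[row i _]trmxK dotp_ortho; apply/eqP; rewrite dotp_eq0C; apply: Lv => u Lu.
apply/eqP; rewrite -dotp_ortho trmxK (submx_trans (row_sub _ _)) // submx_ortho.
exact: BL.
Qed.

End Subspaces.

Section StandardQuantumEntity.
Variable n : nat.
Implicit Types (c d u v w : 'cV[CC]_n) (s t : state n) (P x : 'M[CC]_n).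
Implicit Types (K : state n -> Prop) (L M : 'cV[CC]_n -> Prop).

Lemma state_pbar s : exists c, is_pbar c s.
Proof. by case: s => r [c [uc rc]]; exists c. Qed.

Lemma is_pbar_scale c d s : is_pbar c s -> is_pbar d s -> exists a, d = a *: c.
Proof.
move=> [_ sc] [_ sd]; have : st_ray s d by rewrite sd; exists 1; rewrite scale1r.
by rewrite sc.
Qed.

Definition pbar_state c (uc : unitv c) : state n := State (ex_intro _ c (conj uc erefl)).

Lemma stdO_pbar e s x c :
  is_pbar c s -> stdO e s x <-> x \in sval e /\ x *m c != 0.
Proof.
move=> cs; split; last by move=> [xe xc]; split=> //; exists c; split=> //; apply/eqP.
move=> [xe [d [ds /eqP xd]]]; split=> //; apply: contraNneq xd => xc.
by have [a ->] := is_pbar_scale cs ds; rewrite -scalemxAr xc scaler0.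
Qed.

Definition rank1_proj c : 'M[CC]_n := c *m (map_mx Num.conj c)^T.

Lemma rank1_projE c v : rank1_proj c *m v = dotp c v *: c.
Proof.
rewrite -mulmxA -mul_mx_scalar; congr (_ *m _).
by apply/matrixP => i j; rewrite !ord1 !mxE; apply: eq_bigr => k _; rewrite !mxE.
Qed.

Lemma rank1_proj_eq0 c v : unitv c -> (rank1_proj c *m v == 0) = (dotp c v == 0).
Proof. by move=> uc; rewrite rank1_projE scaler_eq0 (negPf (unitv_neq0 uc)) orbF. Qed.

Lemma rank1_proj_orth c : unitv c -> orth_proj (rank1_proj c) /\ rank1_proj c <> 0.
Proof.
move=> uc; split; first split.
- by rewrite {2}/rank1_proj mulmxA rank1_projE -scalemxAl uc scale1r.
- by apply/matrixP => i j; rewrite !mxE !big_ord1 !mxE rmorphM /= conjCK mulrC.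
- move=> c0; apply: (elimN eqP (unitv_neq0 uc)).
  by rewrite -[c]scale1r -uc -rank1_projE c0 mul0mx.
Qed.

Lemma exists_experiment_proj P : orth_proj P -> P <> 0 ->
  exists e : experiment n, P \in sval e /\ {subset sval e <= [:: P; 1%:M - P]}.
Proof.
move=> [PP PA] P0.
(* Outcomes are nonzero projections, so [1 - P] is only added when [P != 1]. *)
have [P1|P1] := eqVneq P 1%:M.
  have sf : spectral_family [:: P].
    split=> [//| Q | Q R | ]; rewrite ?inE.
    - by move=> /eqP ->.
    - by move=> /eqP -> /eqP ->.
    - by rewrite big_seq1.
  by exists (exist _ _ sf); split=> [|x]; rewrite /= !inE // => ->.
have PQ : P *m (1%:M - P) = 0 by rewrite mulmxBr mulmx1 PP subrr.
have QP : (1%:M - P) *m P = 0 by rewrite mulmxBl mul1mx PP subrr.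
have Q_orth : orth_proj (1%:M - P).
  split; first by rewrite mulmxBl mul1mx PQ subr0.
  apply/matrixP => i j; rewrite !mxE rmorphB /= rmorph_nat -[in RHS]PA !mxE.
  by rewrite eq_sym.
have Q0 : 1%:M - P <> 0 by move/eqP; rewrite subr_eq0 eq_sym (negPf P1).
have sf : spectral_family [:: P; 1%:M - P].
  split.
  - by rewrite /= andbT inE; apply/eqP => PQP; apply: P0; rewrite -PP {2}PQP PQ.
  - by move=> Q /[!inE] /orP [] /eqP ->.
  - by move=> Q R /[!inE] /orP [] /eqP -> /orP [] /eqP ->.
  - by rewrite big_cons big_seq1 addrC subrK.
by exists (exist _ _ sf); split=> [|x]; rewrite /= !inE ?eqxx.
Qed.

Lemma orth_pbarP c d s t : is_pbar c s -> is_pbar d t ->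
  orth (@stdO n) s t <-> dotp c d = 0.
Proof.
move=> cs dt; split.
  case=> -[E sfE] /= sep; have [_ EP _ sumE] := sfE.
  have Pcd P : P \in E -> P *m c = 0 \/ P *m d = 0.
    move=> PE; apply: NNPP => /not_or_and [/eqP Pc /eqP Pd].
    by apply: (sep P); split; [apply/(stdO_pbar _ _ cs) | apply/(stdO_pbar _ _ dt)].
  rewrite -[d]mul1mx -sumE mulmx_suml dotp_sumr big1_seq // => P /andP [_ PE].
  have [[_ PA] _] := EP P PE.
  case: (Pcd P PE) => [Pc|->]; last exact: dotp0r.
  by rewrite dotp_adjmx PA Pc dotp0l.
move=> cd0; have [Po P0] := rank1_proj_orth (proj1 cs).
have [e [Pe eP]] := exists_experiment_proj Po P0.
exists e => x [/(stdO_pbar _ _ cs) [xe /eqP xc] /(stdO_pbar _ _ dt) [_ /eqP xd]].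
have := eP x xe; rewrite !inE => /orP [] /eqP xP; rewrite xP in xc xd.
  by apply: xd; rewrite rank1_projE cd0 scale0r.
by apply: xc; rewrite mulmxBl mul1mx rank1_projE (proj1 cs) scale1r subrr.
Qed.

Lemma sperp_pbar K : sperp (@stdO n) K = pbar_set (vperp (vecs_of K)).
Proof.
apply: pred_ext => s; split.
  move=> Ks; have [c cs] := state_pbar s; exists c; split=> // u [t [Kt ut]].
  by rewrite dotp_eq0C; apply/(orth_pbarP cs ut)/Ks.
move=> [d [Ld ds]] t Kt; have [u ut] := state_pbar t.
by apply/(orth_pbarP ds ut); rewrite dotp_eq0C; apply: Ld; exists t.
Qed.

Lemma vecs_of_pbar_set M : scale_closed M ->
  vecs_of (pbar_set M) = fun u => unitv u /\ M u.
Proof.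
move=> Msc; apply: pred_ext => u; split.
  move=> [s [[c [Mc cs]] us]]; split; first exact: (proj1 us).
  by have [a ->] := is_pbar_scale cs us; apply: Msc.
move=> [uu Mu]; exists (pbar_state uu); split=> //.
by exists u; split.
Qed.

Lemma cl_orth_pbar K : cl_orth (@stdO n) K = pbar_set (vcl (vecs_of K)).
Proof.
by rewrite /cl_orth sperp_pbar sperp_pbar vecs_of_pbar_set ?vperp_unitv //;
  apply: vperp_scale_closed.
Qed.

Lemma F_orth_pbar_set L : subspace L -> F_orth (@stdO n) (pbar_set L).
Proof.
move=> Ls; have Lsc := subspace_scale_closed Ls.
rewrite /F_orth cl_orth_pbar vecs_of_pbar_set // /vcl vperp_unitv //.
by rewrite -/(vcl L) vcl_subspace.
Qed.

Lemma eig_pbar e A :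
  eig (@stdO n) e A = pbar_set (fun c => forall P, P \in sval e -> ~ A P -> P *m c = 0).
Proof.
apply: pred_ext => s; split.
  move=> As; have [c cs] := state_pbar s; exists c; split=> // P Pe nAP.
  by apply: NNPP => /eqP Pc; apply/nAP/As/(stdO_pbar _ _ cs).
move=> [c [cA cs]] x /(stdO_pbar _ _ cs) [xe /eqP xc].
by apply: NNPP => nAx; apply/xc/cA.
Qed.

Lemma F_orth_eig e A : F_orth (@stdO n) (eig (@stdO n) e A).
Proof.
rewrite eig_pbar; apply: F_orth_pbar_set; split=> [P _ _|a u v Lu Lv P Pe nAP].
  exact: mulmx0.
by rewrite mulmxDr -scalemxAr Lu // Lv // scaler0 addr0.
Qed.

Lemma orth_eig t : exists e A,
  (forall x, A x -> outcomes (@stdO n) e x) /\ eig (@stdO n) e A = orth (@stdO n) ^~ t.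
Proof.
have [w [uw wt]] := state_pbar t; set P := rank1_proj w.
have [Po P0] := rank1_proj_orth uw.
have [e [Pe _]] := exists_experiment_proj Po P0.
exists e, (fun x => outcomes (@stdO n) e x /\ x <> P); split=> [x [] //|].
apply: pred_ext => s; have [c cs] := state_pbar s.
rewrite (orth_pbarP cs (conj uw wt)) -dotp_eq0C; split.
  move=> As; apply/eqP; rewrite -(rank1_proj_eq0 _ uw).
  by apply: contraT => Pc; have [_] := As P (proj2 (stdO_pbar _ _ cs) (conj Pe Pc)).
move=> wc x xs; split; first by exists s.
move=> xP; move: xs; rewrite xP (stdO_pbar _ _ cs) (rank1_proj_eq0 _ uw).
by rewrite wc eqxx => -[].
Qed.

End StandardQuantumEntity.

Theorem mainTheorem17 (n : nat) :
  (forall K : state n -> Prop,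
     sperp (@stdO n) K = pbar_set (vperp (vecs_of K)) /\
     cl_orth (@stdO n) K = pbar_set (vcl (vecs_of K))) /\
  (forall L : 'cV[CC]_n -> Prop,
     closed_subspace L -> F_orth (@stdO n) (pbar_set L)) /\
  (forall K : state n -> Prop, F_eig (@stdO n) K <-> F_orth (@stdO n) K).
Proof.
split; first by move=> K; split; [apply: sperp_pbar | apply: cl_orth_pbar].
(* Topological closedness is automatic in finite dimension. *)
split; first by move=> L [Ls _]; apply: F_orth_pbar_set.
move=> K; split; first by apply: F_orth_of_eig; apply: F_orth_eig.
by apply: F_eig_of_orth; apply: orth_eig.
Qed.
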